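(* Let $H=(V,E,\omega,d)$ be a generalized hypergraph with $V=\{1,\dots,n\}$. For every $\rho\in R_n$ there exists a symmetric matrix $N_{\rho,z}\in M_n(K(z))$ such that for every real $\lambda>0$ the entries of $N_{\rho,z}$ have no pole at $z=\lambda$, the evaluated matrix $N_{\rho,\lambda}$ has non-negative entries, and $N_{\rho,\lambda}\,g=f$ for every $f\in U_\rho$ and every $g\in G_\lambda(f)$.
   Context: A generalized hypergraph $H=(V,E,\omega,d)$ consists of a finite set $V=\{1,\dots,n\}$, a set $E$ of nonempty subsets of $V$, a function $\omega\colon E\to\mathbb{R}_{>0}$ and a function $d\colon V\to\mathbb{R}_{>0}$, $x\mapsto d_x$ (no relation between $d$ and $\omega$ is assumed). Functions $V\to\mathbb{R}$ are identified with vectors $f=(f_1,\dots,f_n)^\top\in\mathbb{R}^n$; $\delta_x$ is the $x$-th standard basis vector. For $e\in E$, $B_e=\mathrm{Conv}\{\delta_x-\delta_y : x,y\in e\}$, and $L(f)=\{\sum_{e\in E}\omega_e\mathtt{b}_e(\mathtt{b}_e^\top f) : \mathtt{b}_e\in\operatorname{argmax}_{\mathtt b\in B_e}\mathtt b^\top f\}\subset\mathbb{R}^n$ (sums of sets are Minkowski sums). $D=\mathrm{diag}(d_1,\dots,d_n)$. $\mathbb{R}^n=\bigsqcup_{\rho\in R_n}U_\rho$ is the partition into order-pattern classes: $f,g$ lie in the same $U_\rho$ iff $\mathrm{sgn}(f_x-f_y)=\mathrm{sgn}(g_x-g_y)$ for all $x,y\in V$. $K=\mathbb{Q}(\{\omega_e\}_{e\in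 E},\{d_x\}_{x\in V})\subset\mathbb{R}$ is the subfield generated by the weights, and $K(z)$ the field of rational functions in $z$ over $K$. For $\lambda>0$, $G_\lambda\colon\mathbb{R}^n\to2^{\mathbb{R}^n}$ is $G_\lambda(f)=(D+\lambda L)(f)=\{Df+\lambda v: v\in L(f)\}$. *)

From HB Require Import structures.
From mathcomp Require Import all_boot all_order all_algebra.
From mathcomp Require Import reals.
Set Implicit Arguments. Unset Strict Implicit. Unset Printing Implicit Defensive.
Import Order.TTheory GRing.Theory Num.Theory.
Local Open Scope ring_scope.

Section Hyper.
Variables (R : realType) (n : nat).

Definition delta (x : 'I_n) : 'cV[R]_n := \col_i (if i == x then 1 else 0).

Definition dotv (b f : 'cV[R]_n) : R := (b^T *m f) 0 0.

Definition in_Be (e : {set 'I_n}) (b : 'cV[R]_n) : Prop :=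
  exists c : 'I_n -> 'I_n -> R,
    (forall x y, 0 <= c x y) /\
    (forall x y, c x y != 0 -> (x \in e) && (y \in e)) /\
    \sum_x \sum_y c x y = 1 /\
    b = \sum_x \sum_y c x y *: (delta x - delta y).

Definition argmax_Be (e : {set 'I_n}) (f b : 'cV[R]_n) : Prop :=
  in_Be e b /\ forall b', in_Be e b' -> dotv b' f <= dotv b f.

Definition Lset (E : {set {set 'I_n}}) (w : {set 'I_n} -> R) (f v : 'cV[R]_n)
  : Prop :=
  exists b : {set 'I_n} -> 'cV[R]_n,
    (forall e, e \in E -> argmax_Be e f (b e)) /\
    v = \sum_(e in E) (w e * dotv (b e) f) *: b e.

Definition Dmx (d : 'I_n -> R) : 'M[R]_n := \matrix_(i, j) (if i == j then d i else 0).

Definition Gset (E : {set {set 'I_n}}) (w : {set 'I_n} -> R) (d : 'I_n -> R)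
  (lam : R) (f g : 'cV[R]_n) : Prop :=
  exists v, Lset E w f v /\ g = Dmx d *m f + lam *: v.

(* f and g lie in the same order-pattern class U_rho *)
Definition same_pattern (f g : 'cV[R]_n) : Prop :=
  forall x y : 'I_n, Num.sg (f x 0 - f y 0) = Num.sg (g x 0 - g y 0).

Definition is_subfield (S : R -> Prop) : Prop :=
  S 0 /\ S 1 /\ (forall x y, S x -> S y -> S (x + y)) /\
  (forall x, S x -> S (- x)) /\ (forall x y, S x -> S y -> S (x * y)) /\
  (forall x, S x -> x != 0 -> S x^-1).

(* K = Q({w_e}_{e in E}, {d_x}_x): the smallest subfield containing the weights *)
Definition inK (E : {set {set 'I_n}}) (w : {set 'I_n} -> R) (d : 'I_n -> R)
  (a : R) : Prop :=
  forall S : R -> Prop, is_subfield S ->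
    (forall e, e \in E -> S (w e)) -> (forall x, S (d x)) -> S a.

Definition polyK E w d (p : {poly R}) : Prop := forall k, inK E w d p`_k.

(* evaluation at z = lam of the matrix of rational functions (P i j)/(Q i j) *)
Definition eval_ratmx (P Q : 'M[{poly R}]_n) (lam : R) : 'M[R]_n :=
  \matrix_(i, j) ((P i j).[lam] / (Q i j).[lam]).

End Hyper.

From HB Require Import structures.
From mathcomp Require Import all_boot all_order all_algebra.
From mathcomp Require Import reals.
From mathcomp Require Import lra.
Import Order.TTheory GRing.Theory Num.Theory.
Local Open Scope ring_scope.
Set Implicit Arguments. Unset Strict Implicit. Unset Printing Implicit Defensive.

(* Fix the order pattern of rho and let rep x be a chosen
   representative of the level set {y | rho y = rho x}.  For f in U_rho, a
   maximiser b_e of b^T f over B_e only charges pairs (x, y) where f is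
   maximal, resp. minimal, on e (argmax_Be_support); hence, summed over a
   level set, b_e (b_e^T f) is the incidence vector of the edge
   top e -> bot e between the highest and lowest levels met by e, times
   f (top e) - f (bot e) (argmax_Be_level).  Summing g in G_lam(f) over
   level sets therefore gives Lred lam applied to the values of f on the
   representatives, where Lred lam = diag(level masses) + lam * (weighted
   graph Laplacian) (level_sum_G).  Such a matrix satisfies a minimum
   principle, so it is invertible with a nonnegative inverse
   (GroundedLaplacian); N_{ij} = (Lred lam)^-1 (rep i) (rep j) solves the
   problem (Lred_solves), and Cramer's rule writes it as adj/det of a
   symmetric polynomial matrix over K[z] (Lpoly_cramer, Lpoly_over). *)

Lemma sum_indicator (R : pzSemiRingType) n (F : 'I_n -> R) x :
  \sum_i (i == x)%:R * F i = F x.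
Proof.
rewrite (bigD1 x) //= eqxx mul1r big1 ?addr0 // => i /negbTE ->.
by rewrite mul0r.
Qed.

Lemma sum_indicatorZ (R : pzRingType) (V : lmodType R) n (F : 'I_n -> V) x :
  \sum_i (i == x)%:R *: F i = F x.
Proof.
rewrite (bigD1 x) //= eqxx scale1r big1 ?addr0 // => i /negbTE ->.
by rewrite scale0r.
Qed.

Lemma psumr2_eq0 (R : numDomainType) (I J : finType) (G : I -> J -> R) :
  (forall x y, 0 <= G x y) -> \sum_x \sum_y G x y = 0 -> forall x y, G x y = 0.
Proof.
move=> G_ge0 G0 x y.
have row0 : \sum_y G x y = 0.
  by apply: (psumr_eq0P _ G0) => // z _; exact: sumr_ge0.
exact: (psumr_eq0P _ row0).
Qed.

Lemma sum_mass1 (R : pzSemiRingType) (I J : finType) (c : I -> J -> R) (k : R) :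
  \sum_x \sum_y c x y = 1 -> \sum_x \sum_y c x y * k = k.
Proof.
move=> c1; under eq_bigr do rewrite -big_distrl.
by rewrite -big_distrl /= c1 mul1r.
Qed.

Section Vectors.
Variables (R : realType) (n : nat).
Implicit Types (x y : 'I_n) (b h : 'cV[R]_n).


Lemma dotv_sum b h : dotv b h = \sum_i b i 0 * h i 0.
Proof. by rewrite /dotv mxE; apply: eq_bigr => i _; rewrite mxE. Qed.

Lemma dotv_edge x y h : dotv (delta R x - delta R y) h = h x 0 - h y 0.
Proof.
rewrite dotv_sum -(sum_indicator (fun i => h i 0) x).
rewrite -(sum_indicator (fun i => h i 0) y) -sumrB.
by apply: eq_bigr => i _; rewrite !mxE mulrBl; do 2 case: eqP.
Qed.

Lemma dotv_comb (c : 'I_n -> 'I_n -> R) h :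
  dotv (\sum_x \sum_y c x y *: (delta R x - delta R y)) h =
  \sum_x \sum_y c x y * (h x 0 - h y 0).
Proof.
rewrite dotv_sum; under eq_bigr do rewrite summxE mulr_suml.
rewrite exchange_big; apply: eq_bigr => x _ /=.
under eq_bigr do rewrite summxE mulr_suml.
rewrite exchange_big; apply: eq_bigr => y _ /=.
under eq_bigr do rewrite mxE -mulrA.
by rewrite -big_distrr -dotv_sum dotv_edge.
Qed.

Lemma edge_in_Be (e : {set 'I_n}) x y :
  x \in e -> y \in e -> in_Be e (delta R x - delta R y).
Proof.
move=> xe ye; exists (fun u v => (u == x)%:R * (v == y)%:R); split.
  by move=> u v; rewrite mulr_ge0 ?ler0n.
split.
  move=> u v; rewrite -natrM mulnb pnatr_eq0 eqb0 negbK.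
  by case/andP => /eqP-> /eqP->; rewrite xe ye.
split.
  have one (z : 'I_n) : \sum_i (i == z)%:R = 1 :> R.
    by rewrite -[RHS](sum_indicator (fun=> 1) z); apply: eq_bigr => i _; rewrite mulr1.
  by under eq_bigr do rewrite -big_distrr /= one mulr1; rewrite one.
under eq_bigr do under eq_bigr do rewrite -scalerA.
under eq_bigr do rewrite -scaler_sumr sum_indicatorZ.
by rewrite sum_indicatorZ.
Qed.

Lemma Dmx_mul (d : 'I_n -> R) (f : 'cV[R]_n) j :
  (Dmx d *m f) j 0 = d j * f j 0.
Proof.
rewrite mxE (bigD1 j) //= !mxE eqxx big1 ?addr0 // => k kj.
by rewrite mxE eq_sym (negbTE kj) mul0r.
Qed.

End Vectors.

Section SamePattern.
Variables (R : realType) (n : nat) (f g : 'cV[R]_n).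
Hypothesis fg : same_pattern f g.

Lemma pattern_eq x y : (f x 0 == f y 0) = (g x 0 == g y 0).
Proof. by rewrite -subr_eq0 -sgr_eq0 fg sgr_eq0 subr_eq0. Qed.

Lemma pattern_le x y : g x 0 <= g y 0 -> f x 0 <= f y 0.
Proof.
by have := fg y x; rewrite -subr_ge0 -sgr_ge0 => <-; rewrite sgr_ge0 subr_ge0.
Qed.

End SamePattern.

Section ArgmaxBe.
Variables (R : realType) (n : nat) (e : {set 'I_n}) (f : 'cV[R]_n).
Variables (xm ym : 'I_n).
Hypotheses (xm_in : xm \in e) (ym_in : ym \in e).
Hypothesis f_range : forall y, y \in e -> f ym 0 <= f y 0 <= f xm 0.

Lemma argmax_Be_support b : argmax_Be e f b ->
  exists c : 'I_n -> 'I_n -> R,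
    [/\ \sum_x \sum_y c x y = 1,
        b = \sum_x \sum_y c x y *: (delta R x - delta R y) &
        forall x y, c x y != 0 -> f x 0 = f xm 0 /\ f y 0 = f ym 0].
Proof.
case=> -[c [c_ge0 [c_supp [c_sum ->]]]] b_max; exists c; split=> // x y cxy.
pose M := f xm 0 - f ym 0.
have term_le u v : c u v * (f u 0 - f v 0) <= c u v * M.
  have [-> | /c_supp/andP[ue ve]] := eqVneq (c u v) 0; first by rewrite !mul0r.
  apply: ler_wpM2l => //; move: (f_range ue) (f_range ve); rewrite /M; lra.
have M_le : M <= \sum_u \sum_v c u v * (f u 0 - f v 0).
  by rewrite -dotv_comb /M -dotv_edge; apply/b_max/edge_in_Be.
have gap0 : forall u v, c u v * M - c u v * (f u 0 - f v 0) = 0.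
  apply: psumr2_eq0 => [u v|]; first by rewrite subr_ge0.
  apply/eqP; rewrite eq_le; apply/andP; split; last first.
    by do 2 (apply: sumr_ge0 => ? _); rewrite subr_ge0.
  by under eq_bigr do rewrite sumrB; rewrite sumrB sum_mass1 // subr_le0.
move/eqP: (gap0 x y); rewrite subr_eq0 => /eqP/(mulfI cxy).
have /c_supp/andP[xe ye] := cxy.
by move: (f_range xe) (f_range ye); rewrite /M; lra.
Qed.

Lemma argmax_Be_dot b (h : 'cV[R]_n) : argmax_Be e f b ->
  (forall x, f x 0 = f xm 0 -> h x 0 = h xm 0) ->
  (forall y, f y 0 = f ym 0 -> h y 0 = h ym 0) ->
  dotv b h = h xm 0 - h ym 0.
Proof.
move=> /argmax_Be_support[c [c_sum -> c_supp]] h_max h_min.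
rewrite dotv_comb -[RHS](sum_mass1 _ c_sum); apply: eq_bigr => x _.
apply: eq_bigr => y _; have [-> | /c_supp[fx fy]] := eqVneq (c x y) 0.
  by rewrite !mul0r.
by rewrite (h_max x fx) (h_min y fy).
Qed.

End ArgmaxBe.

Section GroundedLaplacian.
Variables (R : realFieldType) (m : nat) (I : finType) (K : {set I}).
Variables (c : I -> R) (s t : I -> 'I_m) (p : 'I_m -> R).
Hypotheses (c_ge0 : forall k, k \in K -> 0 <= c k) (p_gt0 : forall a, 0 < p a).

Definition incid (k : I) (a : 'I_m) : R := (a == s k)%:R - (a == t k)%:R.

Definition laplace_mx : 'M[R]_m :=
  \matrix_(a, b) ((a == b)%:R * p a + \sum_(k in K) c k * incid k a * incid k b).

Lemma incid_sum k (F : 'I_m -> R) : \sum_b incid k b * F b = F (s k) - F (t k).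
Proof. by under eq_bigr do rewrite mulrBl; rewrite sumrB !sum_indicator. Qed.

Lemma laplace_mul (x : 'cV[R]_m) a : (laplace_mx *m x) a 0 =
  p a * x a 0 + \sum_(k in K) c k * incid k a * (x (s k) 0 - x (t k) 0).
Proof.
rewrite mxE; under eq_bigr do rewrite mxE mulrDl.
rewrite big_split /=; congr (_ + _).
  under eq_bigr do rewrite (mulrC _ (p a)) -mulrA (eq_sym a).
  by rewrite -big_distrr /= sum_indicator.
under eq_bigr do rewrite mulr_suml.
rewrite exchange_big /=; apply: eq_bigr => k _.
rewrite -(incid_sum k (fun b => x b 0)) big_distrr /=.
by apply: eq_bigr => b _; rewrite !mulrA.
Qed.

Lemma laplace_tr : laplace_mx^T = laplace_mx.
Proof.
apply/matrixP => a b; rewrite !mxE eq_sym; congr (_ + _).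
  by have [->|] := eqVneq b a; rewrite ?mul0r.
by apply: eq_bigr => k _; rewrite -!mulrA (mulrC (incid k b)).
Qed.

Lemma incid_at_min k (x : 'cV[R]_m) a : (forall j, x a 0 <= x j 0) ->
  incid k a * (x (s k) 0 - x (t k) 0) <= 0.
Proof.
move=> x_min; move: (x_min (s k)) (x_min (t k)); rewrite /incid.
by have [<-|] := eqVneq a (s k); have [<-|] := eqVneq a (t k) => /= *; lra.
Qed.

Lemma laplace_min_principle (x : 'cV[R]_m) :
  (forall a, 0 <= (laplace_mx *m x) a 0) -> forall a, 0 <= x a 0.
Proof.
move=> Lx_ge0 a; have [a0 _ a0_min] := arg_minP (fun i => x i 0) (isT : predT a).
have {}a0_min j : x a0 0 <= x j 0 by exact: a0_min.
apply: le_trans (a0_min a); move: (Lx_ge0 a0); rewrite laplace_mul => Lx0.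
have edges_le0 : \sum_(k in K) c k * incid k a0 * (x (s k) 0 - x (t k) 0) <= 0.
  by rewrite sumr_le0 // => k kK; rewrite -mulrA mulr_ge0_le0 ?c_ge0 ?incid_at_min.
by rewrite -(pmulr_rge0 _ (p_gt0 a0)); lra.
Qed.

(* By the minimum principle applied to x and -x, the kernel is trivial. *)
Lemma laplace_unit : laplace_mx \in unitmx.
Proof.
rewrite unitmxE unitfE; apply/negP => /det0P[v v_neq0 vL0].
have Lv0 : laplace_mx *m v^T = 0 by rewrite -laplace_tr -trmx_mul vL0 trmx0.
have v_ge0 : forall j, 0 <= v^T j 0.
  by apply: laplace_min_principle => a; rewrite Lv0 mxE.
have v_le0 : forall j, 0 <= (- v^T) j 0.
  by apply: laplace_min_principle => a; rewrite mulmxN Lv0 oppr0 mxE.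
move/eqP: v_neq0; apply; apply/matrixP => i j; rewrite (ord1 i).
by move: (v_ge0 j) (v_le0 j); rewrite !mxE; lra.
Qed.

(* The inverse is entrywise nonnegative: its columns solve L x = delta_j >= 0. *)
Lemma laplace_inv_ge0 i j : 0 <= invmx laplace_mx i j.
Proof.
have -> : invmx laplace_mx i j = col j (invmx laplace_mx) i 0 by rewrite mxE.
apply: laplace_min_principle => a.
by rewrite colE mulmxA mulmxV ?laplace_unit // mul1mx mxE ler0n.
Qed.

End GroundedLaplacian.

Section SubfieldPolynomials.
Variables (R : realType) (S : R -> Prop).
Hypothesis S_field : is_subfield S.

Let S0 : S 0. Proof. by case: S_field. Qed.
Let S1 : S 1. Proof. by case: S_field => _ []. Qed.
Let SD x y : S x -> S y -> S (x + y).
Proof. by case: S_field => _ [_ [hD _]]; exact: hD. Qed.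
Let SN x : S x -> S (- x).
Proof. by case: S_field => _ [_ [_ [hN _]]]; exact: hN. Qed.
Let SM x y : S x -> S y -> S (x * y).
Proof. by case: S_field => _ [_ [_ [_ [hM _]]]]; exact: hM. Qed.

Lemma subfield_sum (J : finType) (P : pred J) (F : J -> R) :
  (forall j, P j -> S (F j)) -> S (\sum_(j | P j) F j).
Proof. by move=> SF; apply: big_ind. Qed.

Lemma subfield_nat k : S k%:R.
Proof. by elim: k => // k Sk; rewrite mulrS; apply: SD. Qed.

Definition poly_over (q : {poly R}) : Prop := forall k, S q`_k.

Lemma poly_overC a : S a -> poly_over a%:P.
Proof. by move=> Sa k; rewrite coefC; case: eqP. Qed.

Lemma poly_overX : poly_over 'X.
Proof. by move=> k; rewrite coefX; apply: subfield_nat. Qed.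

Lemma poly_overD q1 q2 : poly_over q1 -> poly_over q2 -> poly_over (q1 + q2).
Proof. by move=> Sq1 Sq2 k; rewrite coefD; apply: SD. Qed.

Lemma poly_overM q1 q2 : poly_over q1 -> poly_over q2 -> poly_over (q1 * q2).
Proof. by move=> Sq1 Sq2 k; rewrite coefM; apply: subfield_sum => j _; apply: SM. Qed.

Lemma poly_over_sign k : poly_over ((-1) ^+ k).
Proof.
elim: k => [|k Sk]; first by rewrite expr0 -polyC1; apply: poly_overC.
rewrite exprS; apply: poly_overM Sk.
by rewrite -polyC1 -polyCN; apply/poly_overC/SN.
Qed.

(* Leibniz's formula: det and adjugate of a matrix over S[z] lie in S[z]. *)
Lemma poly_over_det m (A : 'M[{poly R}]_m) :
  (forall i j, poly_over (A i j)) -> poly_over (\det A).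
Proof.
move=> SA; apply: big_ind => [k||s _]; first by rewrite coef0.
  exact: poly_overD.
apply: poly_overM; first exact: poly_over_sign.
apply: big_ind => //; last exact: poly_overM.
by rewrite -polyC1; apply: poly_overC.
Qed.

Lemma poly_over_adj m (A : 'M[{poly R}]_m) i j :
  (forall i j, poly_over (A i j)) -> poly_over (\adj A i j).
Proof.
move=> SA; rewrite mxE; apply: poly_overM; first exact: poly_over_sign.
by apply: poly_over_det => k l; rewrite !mxE.
Qed.

End SubfieldPolynomials.

(* K = Q({w_e}, {d_x}) is itself a subfield: it is an intersection of subfields. *)
Lemma inK_subfield (R : realType) n E w (d : 'I_n -> R) :
  is_subfield (inK E w d).
Proof.
split; [|split; [|split; [|split; [|split]]]].
- by move=> S [].
- by move=> S [_ []].
- move=> x y Kx Ky S SF Sw Sd; have [_ [_ [SD _]]] := SF.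
  exact: SD (Kx _ SF Sw Sd) (Ky _ SF Sw Sd).
- move=> x Kx S SF Sw Sd; have [_ [_ [_ [SN _]]]] := SF.
  exact: SN (Kx _ SF Sw Sd).
- move=> x y Kx Ky S SF Sw Sd; have [_ [_ [_ [_ [SM _]]]]] := SF.
  exact: SM (Kx _ SF Sw Sd) (Ky _ SF Sw Sd).
- move=> x Kx x_neq0 S SF Sw Sd; have [_ [_ [_ [_ [_ SV]]]]] := SF.
  exact: SV (Kx _ SF Sw Sd) x_neq0.
Qed.

(* Collapsing the vertex set along the rho-levels.  The point x0 only serves
   as a default value for empty hyperedges. *)
Section Reduction.
Variables (R : realType) (n : nat) (x0 : 'I_n).
Variables (E : {set {set 'I_n}}) (w : {set 'I_n} -> R) (d : 'I_n -> R).
Hypothesis hE : forall e, e \in E -> e != set0.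
Hypothesis hw : forall e, e \in E -> 0 < w e.
Hypothesis hd : forall x, 0 < d x.
Variable rho : 'cV[R]_n.

Definition rep (x : 'I_n) : 'I_n := odflt x [pick y | rho y 0 == rho x 0].

Lemma rep_val x : rho (rep x) 0 = rho x 0.
Proof. by rewrite /rep; case: pickP => [y /eqP|]. Qed.

Lemma rep_eq x y : rho x 0 = rho y 0 -> rep x = rep y.
Proof.
move=> rxy; rewrite /rep (eq_pick (Q := [pred z | rho z 0 == rho y 0])) => [|z].
  by case: pickP => // /(_ y); rewrite /= eqxx.
by rewrite /= rxy.
Qed.

Lemma rep_idem x : rep (rep x) = rep x.
Proof. by apply: rep_eq; rewrite rep_val. Qed.

Lemma rep_pattern (f : 'cV[R]_n) : same_pattern f rho ->
  forall x, f (rep x) 0 = f x 0.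
Proof. by move=> fr x; apply/eqP; rewrite (pattern_eq fr) rep_val. Qed.

Lemma rep_pattern_eq (f : 'cV[R]_n) : same_pattern f rho ->
  forall x y, f x 0 = f y 0 -> rep x = rep y.
Proof. by move=> fr x y /eqP; rewrite (pattern_eq fr) => /eqP; apply: rep_eq. Qed.

(* A point of e maximising F (arbitrary if e is empty). *)
Definition argmax_in (F : 'I_n -> R) (e : {set 'I_n}) : 'I_n :=
  odflt x0 [pick x in e | [forall y in e, F y <= F x]].

Lemma argmax_inP F e : e != set0 ->
  argmax_in F e \in e /\ forall y, y \in e -> F y <= F (argmax_in F e).
Proof.
move=> /set0Pn[z ze]; have [m me m_max] := arg_maxP F ze.
rewrite /argmax_in; case: pickP => [x /andP[xe /forall_inP x_max] | /(_ m)] //=.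
suff -> : (m \in e) && [forall y in e, F y <= F m] by [].
by apply/andP; split => //; apply/forall_inP => y; exact: m_max.
Qed.

Definition top (e : {set 'I_n}) : 'I_n := rep (argmax_in (fun x => rho x 0) e).
Definition bot (e : {set 'I_n}) : 'I_n := rep (argmax_in (fun x => - rho x 0) e).

Lemma argmax_Be_level (f : 'cV[R]_n) (fr : same_pattern f rho)
  e (eE : e \in E) b (hb : argmax_Be e f b) a :
  dotv b f * (\sum_(j | rep j == a) b j 0) =
  incid R top bot e a * (f (top e) 0 - f (bot e) 0).
Proof.
set xm := argmax_in (fun x => rho x 0) e.
set ym := argmax_in (fun x => - rho x 0) e.
have [xm_in xm_max] := argmax_inP (fun x => rho x 0) (hE eE).
have [ym_in ym_min] := argmax_inP (fun x => - rho x 0) (hE eE).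
have f_range y : y \in e -> f ym 0 <= f y 0 <= f xm 0.
  move=> ye; rewrite !(pattern_le fr) ?xm_max //.
  by rewrite -lerN2; apply: ym_min.
have f_dot := argmax_Be_dot xm_in ym_in f_range hb.
pose h : 'cV[R]_n := \col_j (rep j == a)%:R.
have -> : \sum_(j | rep j == a) b j 0 = dotv b h.
  rewrite dotv_sum big_mkcond; apply: eq_bigr => j _.
  by rewrite mxE; case: eqP; rewrite ?mulr1 ?mulr0.
have h_level x y : f x 0 = f y 0 -> h x 0 = h y 0.
  by move=> /(rep_pattern_eq fr) rxy; rewrite !mxE rxy.
rewrite (f_dot f) // (f_dot h) => [|x|y]; try exact: h_level.
by rewrite /top /bot !(rep_pattern fr) !mxE mulrC /incid !(eq_sym a).
Qed.

(* Total D-mass of a rho-level set, recorded at its representative; the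
   rows of non-representatives are inert (mass 1, no edges). *)
Definition mass (a : 'I_n) : R :=
  if rep a == a then \sum_(x | rep x == a) d x else 1.

Lemma mass_gt0 a : 0 < mass a.
Proof.
rewrite /mass; case: eqP => // a_rep.
by rewrite (bigD1 a) ?a_rep //= ltr_wpDr ?hd // sumr_ge0 // => x _; apply/ltW.
Qed.

Definition Lred (lam : R) : 'M[R]_n :=
  laplace_mx E (fun e => lam * w e) top bot mass.

(* Lred lam is a grounded Laplacian for lam > 0. *)
Lemma Lred_unit lam : 0 < lam -> Lred lam \in unitmx.
Proof.
move=> lam_gt0; apply: laplace_unit => [e eE|]; last exact: mass_gt0.
by rewrite mulr_ge0 ?ltW ?hw.
Qed.

Lemma Lred_inv_ge0 lam i j : 0 < lam -> 0 <= invmx (Lred lam) i j.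
Proof.
move=> lam_gt0; apply: laplace_inv_ge0 => [e eE|]; last exact: mass_gt0.
by rewrite mulr_ge0 ?ltW ?hw.
Qed.

Definition on_reps (f : 'cV[R]_n) : 'cV[R]_n :=
  \col_a (if rep a == a then f a 0 else 0).

Lemma on_reps_rep f x : on_reps f (rep x) 0 = f (rep x) 0.
Proof. by rewrite mxE rep_idem eqxx. Qed.

Lemma level_sum_G lam (f g : 'cV[R]_n) : same_pattern f rho ->
  Gset E w d lam f g ->
  forall a, \sum_(j | rep j == a) g j 0 = (Lred lam *m on_reps f) a 0.
Proof.
move=> fr [v [[b [hb ->]] ->]] a; rewrite laplace_mul.
have g_entry j :
    (Dmx d *m f + lam *: \sum_(e in E) (w e * dotv (b e) f) *: b e) j 0 =
    d j * f j 0 + lam * \sum_(e in E) w e * dotv (b e) f * b e j 0.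
  by rewrite mxE Dmx_mul mxE summxE; under eq_bigr do rewrite mxE.
under eq_bigr do rewrite g_entry.
rewrite big_split /= -big_distrr /= exchange_big /=; congr (_ + _).
  rewrite /mass mxE; case: eqP => [a_rep | a_nrep].
    under eq_bigr => j /eqP rj do rewrite -(rep_pattern fr j) rj.
    by rewrite -big_distrl.
  by rewrite mulr0; apply: big1 => j /eqP rj; case: a_nrep; rewrite -rj rep_idem.
rewrite big_distrr; apply: eq_bigr => e eE /=.
rewrite -big_distrr /= -mulrA mulrA (argmax_Be_level fr eE (hb e eE)).
by rewrite /top /bot !on_reps_rep mulrA.
Qed.

Lemma Lred_solves lam (f g : 'cV[R]_n) : 0 < lam -> same_pattern f rho ->
  Gset E w d lam f g ->
  forall i, \sum_j invmx (Lred lam) (rep i) (rep j) * g j 0 = f i 0.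
Proof.
move=> lam_gt0 fr hg i; rewrite (partition_big rep predT) //=.
have level a : \sum_(j | rep j == a) invmx (Lred lam) (rep i) (rep j) * g j 0
    = invmx (Lred lam) (rep i) a * (Lred lam *m on_reps f) a 0.
  by rewrite -(level_sum_G fr hg) big_distrr; apply: eq_bigr => j /eqP ->.
under eq_bigr do rewrite level.
have -> : forall M : 'M[R]_n, \sum_a invmx M (rep i) a * (M *m on_reps f) a 0
    = (invmx M *m (M *m on_reps f)) (rep i) 0 by move=> M; rewrite mxE.
by rewrite mulmxA mulVmx ?Lred_unit // mul1mx on_reps_rep rep_pattern.
Qed.

Definition Lpoly : 'M[{poly R}]_n :=
  \matrix_(a, b) (((a == b)%:R * mass a)%:P +
    (\sum_(e in E) w e * incid R top bot e a * incid R top bot e b)%:P * 'X).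

Lemma Lpoly_eval lam : map_mx (horner_eval lam) Lpoly = Lred lam.
Proof.
apply/matrixP => a b; rewrite !mxE /horner_eval hornerD hornerMX !hornerC.
by rewrite mulr_suml; congr (_ + _); apply: eq_bigr => e _; rewrite mulrC !mulrA.
Qed.

Lemma Lpoly_tr : Lpoly^T = Lpoly.
Proof.
apply/matrixP => a b; rewrite !mxE eq_sym; congr (_%:P + _%:P * _).
  by have [->|] := eqVneq b a; rewrite ?mul0r.
by apply: eq_bigr => e _; rewrite -!mulrA (mulrC (incid _ _ _ e b)).
Qed.

Lemma Lpoly_over a b : poly_over (inK E w d) (Lpoly a b).
Proof.
have K_field := inK_subfield E w d.
have K_incid e x : inK E w d (incid R top bot e x).
  have [_ [_ [K_add [K_opp _]]]] := K_field.
  by apply: (K_add); last apply: (K_opp); exact: subfield_nat K_field _.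
have [_ [K1 [_ [_ [K_mul _]]]]] := K_field.
rewrite mxE; apply: (poly_overD K_field _ _).
  apply: (poly_overC K_field _).
  apply: (K_mul); first exact: subfield_nat K_field _.
  rewrite /mass; case: ifP => _ //.
  by apply: (subfield_sum K_field) => x _ S _ _ Sd; apply: Sd.
apply: (poly_overM K_field _ _); last exact: poly_overX K_field.
apply: (poly_overC K_field _); apply: (subfield_sum K_field) => e eE.
apply: (K_mul); last exact: K_incid; apply: (K_mul); last exact: K_incid.
by move=> S _ Sw _; apply: Sw.
Qed.

Lemma Lpoly_det_neq0 lam : 0 < lam -> (\det Lpoly).[lam] != 0.
Proof. by move=> /Lred_unit; rewrite unitmxE unitfE -Lpoly_eval det_map_mx. Qed.

Lemma Lpoly_cramer lam a b : 0 < lam ->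
  (\adj Lpoly a b).[lam] / (\det Lpoly).[lam] = invmx (Lred lam) a b.
Proof.
move=> lam_gt0; rewrite /invmx Lred_unit // -Lpoly_eval -map_mx_adj det_map_mx.
by rewrite !mxE mulrC.
Qed.

Lemma Lpoly_adj_sym a b : \adj Lpoly a b = \adj Lpoly b a.
Proof. by rewrite -[in RHS]Lpoly_tr -trmx_adj [RHS]mxE. Qed.

End Reduction.

Theorem mainTheorem17 (R : realType) (n : nat)
  (E : {set {set 'I_n}}) (w : {set 'I_n} -> R) (d : 'I_n -> R)
  (hE : forall e, e \in E -> e != set0)
  (hw : forall e, e \in E -> 0 < w e)
  (hd : forall x, 0 < d x)
  (rho : 'cV[R]_n) :
  exists P Q : 'M[{poly R}]_n,
    (* entries P i j / Q i j are elements of K(z) *)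
    (forall i j, polyK E w d (P i j) /\ polyK E w d (Q i j) /\ Q i j != 0) /\
    (* symmetry in M_n(K(z)) *)
    (forall i j, P i j * Q j i = P j i * Q i j) /\
    forall lam : R, 0 < lam ->
      (forall i j, (Q i j).[lam] != 0) /\
      (forall i j, 0 <= eval_ratmx P Q lam i j) /\
      (forall f g, same_pattern f rho -> Gset E w d lam f g ->
         eval_ratmx P Q lam *m g = f).
Proof.
case: n E w d hE hw hd rho => [|n] E w d hE hw hd rho.
  have no_index (i : 'I_0) : False by case: i => m; rewrite ltn0.
  exists 0, 0; split=> [i|]; first by case: (no_index i).
  split=> [i|lam _]; first by case: (no_index i).
  do 2 (split=> [i|]; first by case: (no_index i)).
  by move=> f g _ _; apply/matrixP => i; case: (no_index i).
pose L := Lpoly ord0 E w d rho.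
pose P : 'M_n.+1 := \matrix_(i, j) \adj L (rep rho i) (rep rho j).
pose Q : 'M_n.+1 := const_mx (\det L).
have PE i j : P i j = \adj L (rep rho i) (rep rho j) by rewrite mxE.
have QE i j : Q i j = \det L by rewrite mxE.
have K_field := inK_subfield E w d.
exists P, Q; split=> [i j|]; rewrite ?PE ?QE.
  split; first exact (poly_over_adj K_field _ _ (Lpoly_over ord0 rho)).
  split; first exact (poly_over_det K_field (Lpoly_over ord0 rho)).
  apply: (contra_neq _ (Lpoly_det_neq0 ord0 hw hd rho ltr01)) => ->.
  by rewrite horner0.
split=> [i j|lam lam_gt0]; first by rewrite !PE !QE Lpoly_adj_sym.
have N_inv i j : eval_ratmx P Q lam i j =
    invmx (Lred ord0 E w d rho lam) (rep rho i) (rep rho j).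
  by rewrite mxE PE QE Lpoly_cramer.
split=> [i j|]; first by rewrite QE Lpoly_det_neq0.
split=> [i j|f g fr hg]; first by rewrite N_inv Lred_inv_ge0.
apply/matrixP => i k; rewrite (ord1 k) mxE; under eq_bigr do rewrite N_inv.
exact: Lred_solves.
Qed.
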